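(* Let $\mathcal O$ be the suboperad of $\mathrm{CNCB}$ generated by $p:=T_{bbu}$ and $c:=T_{buu}$. Then $\mathcal O$ admits the presentation with generators $p,c$ of arity $2$ and relations $$(c\circ_2 p)\circ_2 c=(c\circ_1 c)\circ_2 p,\qquad (p\circ_2 p)\circ_2 c=(p\circ_1 c)\circ_2 p.$$ That is, $\mathcal O$ is isomorphic, via the morphism sending the generators to $p$ and $c$, to the quotient of the free operad on two binary generators by the operadic congruence generated by these two relations.
   Context: For $n\ge2$, a bicoloured noncrossing configuration (BNC) of size $n$ is a regular polygon with vertices $1,\dots,n+1$ clockwise, together with disjoint sets of blue and red arcs among the arcs $(i,j)$, $1\le i<j\le n+1$. The arcs $(i,i+1)$ are the edges ($i$th edge), $(1,n+1)$ is the base, and the others are diagonals. Coloured arcs are pairwise noncrossing ($(i,j),(k,l)$ cross iff $i<k<j<l$ or $k<i<l<j$), and red arcs are diagonals. There is one BNC of size $1$, a blue segment, which is the unit. The operad $\mathrm{CNCB}$ has the BNCs as elements (arity = size). Its composition $\mathfrak C\circ_i\mathfrak D$ ($\mathfrak C$ of size $n$, $\mathfrak D$ of size $m$) glues the base of $\mathfrak D$ on the $i$th edge of $\mathfrak C$. Arcs $(a,b)$ of $\mathfrak C$ become $(\sigma(a),\sigma(b))$ with $\sigma(v)=v$ for $v\le i$ and $v+m-1$ otherwise, and arcs $(a,b)$ of $\mathfrak D$ become $(a+i-1,b+i-1)$, keeping colours. The exception is the arc $(i,i+m)$, which is red if the $i$th edge of $\mathfrak C$ and the base of $\mathfrak D$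 are both uncoloured, blue if both are blue, and uncoloured otherwise. For $x,y,z\in\{b,u\}$, $T_{xyz}$ denotes the BNC of size $2$ (a triangle with vertices $1,2,3$) whose first edge $(1,2)$ has colour $x$, whose base $(1,3)$ has colour $y$, and whose second edge $(2,3)$ has colour $z$, where $b$ = blue and $u$ = uncoloured. The suboperad generated by a set is the smallest suboperad containing it. *)

From HB Require Import structures.
From mathcomp Require Import all_boot.
Set Implicit Arguments. Unset Strict Implicit. Unset Printing Implicit Defensive.

Inductive colour := cU | cB | cR.
Definition colour_eqb (x y : colour) : bool :=
  match x, y with cU, cU | cB, cB | cR, cR => true | _, _ => false end.
Lemma colour_eqP : Equality.axiom colour_eqb.
Proof. by case; case; constructor. Qed.
HB.instance Definition _ := hasDecEq.Build colour colour_eqP.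

(** A (candidate) bicoloured noncrossing configuration of size [bsize]:
    vertices are the naturals 1 .. bsize+1, and the colour of the arc (a,b)
    is entry b of row a of the table [btab] (a computable, canonical
    representation; see [mk]).  Only the entries with
    1 <= a < b <= bsize+1 are meaningful; in all configurations built with
    [mk] the other entries are [cU]. *)
Record bnc := BNC { bsize : nat; btab : seq (seq colour) }.

Definition getc (x : bnc) (a b : nat) : colour :=
  nth cU (nth [::] (btab x) a) b.

Definition is_arc (n a b : nat) : bool := [&& 1 <= a, a < b & b <= n.+1].

Definition mk (n : nat) (f : nat -> nat -> colour) : bnc :=
  @BNC n [seq [seq (if is_arc n a b then f a b else cU) | b <- iota 0 n.+2]
         | a <- iota 0 n.+2].

Definition crosses (a b c d : nat) : bool :=
  ((a < c) && (c < b) && (b < d)) || ((c < a) && (a < d) && (d < b)).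

(** Validity of a BNC (the elements of CNCB); recorded for documentation. *)
Definition valid_bnc (x : bnc) : Prop :=
  let n := bsize x in
  [/\ 1 <= n,
      (forall a b, ~~ is_arc n a b -> getc x a b = cU),
      (n = 1 -> getc x 1 2 = cB),
      (forall a b, getc x a b = cR -> (b != a.+1) && ~~ ((a == 1) && (b == n.+1)))
    & (forall a b c d, getc x a b != cU -> getc x c d != cU -> ~~ crosses a b c d)].

Definition unit_bnc : bnc := mk 1 (fun _ _ => cB).

Definition comp (C : bnc) (i : nat) (D : bnc) : bnc :=
  let n := bsize C in
  let m := bsize D in
  let outside v := (v <= i) || (i + m <= v) in
  let unsig v := if v <= i then v else v - (m - 1) in
  mk (n + m - 1) (fun a b =>
    if (a == i) && (b == i + m) then
      match getc C i i.+1, getc D 1 m.+1 with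
      | cU, cU => cR
      | cB, cB => cB
      | _, _ => cU
      end
    else if (i <= a) && (b <= i + m) then getc D (a - i + 1) (b - i + 1)
    else if outside a && outside b then getc C (unsig a) (unsig b)
    else cU).

(** T_xyz: first edge (1,2) coloured x, base (1,3) coloured y,
    second edge (2,3) coloured z. *)
Definition tri (x y z : colour) : bnc :=
  mk 2 (fun a b => if (a == 1) && (b == 2) then x
                   else if (a == 1) && (b == 3) then y else z).

Definition p_bnc : bnc := tri cB cB cU.
Definition c_bnc : bnc := tri cB cU cU.

Inductive gen_sub : bnc -> Prop :=
| gs_unit : gen_sub unit_bnc
| gs_p : gen_sub p_bnc
| gs_c : gen_sub c_bnc
| gs_comp C D i : gen_sub C -> gen_sub D -> 1 <= i <= bsize C ->
                  gen_sub (comp C i D).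

(** The free (nonsymmetric) operad on two binary generators: planar binary
    trees with internal nodes labelled by a generator. *)
Inductive gen := gp | gc.
Inductive tree := Leaf | Node (g : gen) (l r : tree).

Fixpoint arity (t : tree) : nat :=
  match t with Leaf => 1 | Node _ l r => arity l + arity r end.

Fixpoint graft (t : tree) (i : nat) (s : tree) : tree :=
  match t with
  | Leaf => if i == 1 then s else Leaf
  | Node g l r => if i <= arity l then Node g (graft l i s) r
                  else Node g l (graft r (i - arity l) s)
  end.

Definition gtree (g : gen) : tree := Node g Leaf Leaf.
Definition P := gtree gp.
Definition Cg := gtree gc.

Inductive cong : tree -> tree -> Prop :=
| cong_rel1 : cong (graft (graft Cg 2 P) 2 Cg) (graft (graft Cg 1 Cg) 2 P)
| cong_rel2 : cong (graft (graft P 2 P) 2 Cg) (graft (graft P 1 Cg) 2 P)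
| cong_refl t : cong t t
| cong_sym t t' : cong t t' -> cong t' t
| cong_trans t t' t'' : cong t t' -> cong t' t'' -> cong t t''
| cong_comp t t' s s' i : cong t t' -> cong s s' -> 1 <= i <= arity t ->
                          cong (graft t i s) (graft t' i s').

Definition gen_bnc (g : gen) : bnc := if g is gp then p_bnc else c_bnc.

Fixpoint eval (t : tree) : bnc :=
  match t with
  | Leaf => unit_bnc
  | Node g l r => comp (comp (gen_bnc g) 2 (eval r)) 1 (eval l)
  end.

From Pilot Require Import Defs.
From mathcomp Require Import all_boot zify.
Set Implicit Arguments. Unset Strict Implicit.

(** A tree [t] evaluates to the configuration whose arc colours [tcol t] are
    computed by structural recursion: g(l, r) carries l on the vertices
    1 .. |l|+1 and r on |l|+1 .. |t|+1, its base is coloured after g, and the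
    arc (|l|+1, |t|+1), where the base of r is glued on the uncoloured second
    edge of g, is red exactly when that base is uncoloured.  Grafting then
    matches composition in CNCB, so the trees describe the generated
    suboperad, and congruent trees have the same evaluation.

    Conversely, orienting the relations as the rotation
    g(c(a, p(b, e)), d) ~> g(a, p(c(b, e), d)) decreases the total arity of
    left subtrees, so every tree is congruent to a normal one, i.e. one in
    which no left subtree has the shape c(a, p(b, e)); the left subtrees of a
    normal tree are then combs.  A normal tree is determined by its colours:
    its root is read off the base, and if two trees g(l, r), g'(l', r') with
    g'(l', r') normal had |l| < |l'|, then the vertex |l|+1 would be interior
    to the comb l', where it is either covered by a coloured arc or its
    longest coloured arc is not blue; in g(l, r) no coloured arc covers
    |l|+1, and the longest coloured arc from it below the top vertex is blue. *)

Definition glue (x y : colour) : colour :=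
  match x, y with cU, cU => cR | cB, cB => cB | _, _ => cU end.
Arguments glue : simpl never.

Definition gen_colour (g : gen) : colour := if g is gp then cB else cU.

Fixpoint tcol (t : tree) (a b : nat) : colour :=
  match t with
  | Leaf => if (a == 1) && (b == 2) then cB else cU
  | Node g l r =>
    if ~~ is_arc (arity l + arity r) a b then cU
    else if (a == 1) && (b == (arity l + arity r).+1) then gen_colour g
    else if b <= (arity l).+1 then tcol l a b
    else if (arity l).+1 <= a then
      (if (a == (arity l).+1) && (b == (arity l + arity r).+1)
       then (if tcol r 1 (arity r).+1 == cU then cR else cU)
       else tcol r (a - arity l) (b - arity l))
    else cU
  end.

Definition comp_colour (fC : nat -> nat -> colour) (i m : nat)
    (fD : nat -> nat -> colour) (a b : nat) : colour :=
  if (a == i) && (b == i + m) then glue (fC i i.+1) (fD 1 m.+1)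
  else if (i <= a) && (b <= i + m) then fD (a - i + 1) (b - i + 1)
  else if ((a <= i) || (i + m <= a)) && ((b <= i) || (i + m <= b)) then
    fC (if a <= i then a else a - (m - 1)) (if b <= i then b else b - (m - 1))
  else cU.

Lemma comp_mk (C D : bnc) i :
  Defs.comp C i D = mk (bsize C + bsize D - 1) (comp_colour (getc C) i (bsize D) (getc D)).
Proof. by []. Qed.

Lemma getc_mk n f a b : getc (mk n f) a b = if is_arc n a b then f a b else cU.
Proof.
rewrite /getc /mk; case: (ltnP a n.+2) => Ha; last first.
  rewrite (nth_default [::]) ?size_map ?size_iota // nth_nil.
  by case: ifP => //; rewrite /is_arc; lia.
rewrite (nth_map 0) ?size_iota // nth_iota // add0n.
case: (ltnP b n.+2) => Hb; first by rewrite (nth_map 0) ?size_iota // nth_iota.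
rewrite nth_default ?size_map ?size_iota //.
by case: ifP => //; rewrite /is_arc; lia.
Qed.

Lemma eq_mk n f g : (forall a b, is_arc n a b -> f a b = g a b) -> mk n f = mk n g.
Proof.
move=> Efg; congr BNC; apply: eq_map => a; apply: eq_map => b.
by case: ifP => // /Efg ->.
Qed.

Lemma arity_gt0 t : 0 < arity t.
Proof. by elim: t => //= g l IHl r IHr; lia. Qed.

Lemma arity_graft t i s :
  1 <= i <= arity t -> arity (graft t i s) = arity t + arity s - 1.
Proof.
elim: t i => [|g l IHl r IHr] i /= Hi.
  have -> : i = 1 by lia.
  by rewrite eqxx; lia.
have := arity_gt0 l; have := arity_gt0 r; have := arity_gt0 s => *.
by case: ifP => Hil /=; [rewrite IHl | rewrite IHr]; lia.
Qed.

Lemma tcol_nonarc t a b : ~~ is_arc (arity t) a b -> tcol t a b = cU.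
Proof.
case: t => [|g l r] /=; last by move=> ->.
by rewrite /is_arc; case: ifP => //; lia.
Qed.

Lemma tcol_outside t a b :
  (a < 1) || (b <= a) || ((arity t).+1 < b) -> tcol t a b = cU.
Proof. by move=> Hab; apply: tcol_nonarc; rewrite /is_arc; lia. Qed.

Lemma tcol_arc t a b : tcol t a b != cU -> [&& 1 <= a, a < b & b <= (arity t).+1].
Proof. by apply: contraR => Hab; rewrite tcol_nonarc. Qed.

Lemma tcol_base t : tcol t 1 (arity t).+1 != cR.
Proof.
case: t => [|g l r] //=.
have := arity_gt0 l; have := arity_gt0 r => *.
rewrite /is_arc; case: ifP => [|_]; first lia.
by rewrite /= !eqxx; case: g.
Qed.

Lemma glue_base t : glue cB (tcol t 1 (arity t).+1) = tcol t 1 (arity t).+1.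
Proof. by move: (tcol_base t); case: tcol. Qed.

Lemma glueU x : glue cU x = if x == cU then cR else cU.
Proof. by case: x. Qed.

Ltac case_innermost_if :=
  match goal with |- context [if ?c then _ else _] =>
    lazymatch c with
    | context [if _ then _ else _] => fail
    | _ => let E := fresh "E" in case E: c
    end
  end.
Ltac index_cases :=
  repeat (first [rewrite if_and | rewrite if_or | rewrite if_neg]);
  repeat (case_innermost_if; try (exfalso; lia)).

Lemma congr_tcol t a1 a2 b1 b2 : a1 = a2 -> b1 = b2 -> tcol t a1 b1 = tcol t a2 b2.
Proof. by move=> -> ->. Qed.

Lemma congr_glue x1 x2 y1 y2 : x1 = x2 -> y1 = y2 -> glue x1 y1 = glue x2 y2.
Proof. by move=> -> ->. Qed.

Lemma tcolU_eq t s a b a' b' :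
  tcol t a b = cU -> tcol s a' b' = cU -> tcol t a b = tcol s a' b'.
Proof. by move=> -> ->. Qed.

(** The case splits on [a = 0] and [b = 0] absorb truncated subtraction. *)
Ltac same_colour :=
  first [ reflexivity | (apply: congr_tcol; lia)
        | (apply: tcolU_eq; apply: tcol_outside; lia)
        | (apply: tcol_outside; lia) | (symmetry; apply: tcol_outside; lia) ].
Ltac same_colour_at a b :=
  first [ same_colour
        | (case: (posnP b) => [->|?]; same_colour)
        | (case: (posnP a) => [->|?]; same_colour)
        | (case: (posnP a) => [->|?]; case: (posnP b) => [->|?]; same_colour) ].
Ltac close_colours a b :=
  lazymatch goal with
  | |- glue _ _ = glue _ _ => apply: congr_glue; same_colour_at a b
  | |- glue cB _ = _ => rewrite glue_base; same_colour_at a b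
  | |- _ = glue cB _ => rewrite glue_base; same_colour_at a b
  | _ => same_colour_at a b
  end.

Lemma tcol_graft_leaf s a b : tcol s a b = comp_colour (tcol Leaf) 1 (arity s) (tcol s) a b.
Proof.
have := arity_gt0 s => Hs.
rewrite /comp_colour /=; index_cases.
all: close_colours a b.
Qed.

Lemma tcol_graft_left g l r s i a b :
  1 <= i <= arity l ->
  (forall a b, tcol (graft l i s) a b = comp_colour (tcol l) i (arity s) (tcol s) a b) ->
  tcol (Node g (graft l i s) r) a b =
    comp_colour (tcol (Node g l r)) i (arity s) (tcol s) a b.
Proof.
move=> Hi IH; have := arity_gt0 s; have := arity_gt0 l; have := arity_gt0 r => *.
rewrite /= arity_graft // !IH /comp_colour /is_arc /=; index_cases.
all: close_colours a b.
Qed.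

Lemma tcol_graft_right g l r s i a b :
  arity l < i <= arity l + arity r -> 2 <= arity r ->
  (forall a b, tcol (graft r (i - arity l) s) a b =
                 comp_colour (tcol r) (i - arity l) (arity s) (tcol s) a b) ->
  tcol (Node g l (graft r (i - arity l) s)) a b =
    comp_colour (tcol (Node g l r)) i (arity s) (tcol s) a b.
Proof.
move=> Hi Hr IH; have := arity_gt0 s; have := arity_gt0 l => *.
have Hbase : tcol (graft r (i - arity l) s) 1 (arity (graft r (i - arity l) s)).+1
             = tcol r 1 (arity r).+1.
  rewrite arity_graft; last lia.
  rewrite IH /comp_colour; index_cases.
  all: try close_colours a b.
rewrite /= Hbase arity_graft; last lia.
rewrite !IH /comp_colour /is_arc /=; index_cases.
all: close_colours a b.
Qed.

Lemma tcol_graft_right_leaf g l s a b :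
  tcol (Node g l s) a b = comp_colour (tcol (Node g l Leaf)) (arity l).+1 (arity s) (tcol s) a b.
Proof.
have := arity_gt0 s; have := arity_gt0 l => *.
rewrite /comp_colour /= /is_arc; index_cases.
all: rewrite ?glueU; index_cases.
all: close_colours a b.
Qed.

Lemma tcol_graft t i s a b : 1 <= i <= arity t ->
  tcol (graft t i s) a b = comp_colour (tcol t) i (arity s) (tcol s) a b.
Proof.
elim: t i a b => [|g l IHl r IHr] i a b /= Hi.
  have -> : i = 1 by lia.
  by rewrite /= tcol_graft_leaf.
case: ifP => Hil.
  by apply: tcol_graft_left => [|a' b']; [lia | apply: IHl; lia].
case: r IHr Hi => [|g' l' r'] IHr Hi.
  have -> : i = (arity l).+1 by move: Hi => /=; lia.
  rewrite (_ : (arity l).+1 - arity l = 1); last lia.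
  exact: tcol_graft_right_leaf.
have := arity_gt0 l'; have := arity_gt0 r' => *.
apply: tcol_graft_right => [||a' b']; [lia | rewrite /=; lia | apply: IHr; lia].
Qed.

Lemma getc_tcol t a b : getc (mk (arity t) (tcol t)) a b = tcol t a b.
Proof. by rewrite getc_mk; case: ifP => // /negbT /tcol_nonarc ->. Qed.

Lemma comp_tcol t i s : 1 <= i <= arity t ->
  Defs.comp (mk (arity t) (tcol t)) i (mk (arity s) (tcol s)) =
    mk (arity (graft t i s)) (tcol (graft t i s)).
Proof.
move=> Hi; rewrite comp_mk /= arity_graft //; apply: eq_mk => a b _.
by rewrite tcol_graft // /comp_colour !getc_tcol.
Qed.

Lemma evalE t : eval t = mk (arity t) (tcol t).
Proof.
elim: t => [|g l IHl r IHr].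
  apply: eq_mk => a b; rewrite /is_arc /= => Hab.
  by have [-> ->] : a = 1 /\ b = 2 by lia.
have gen_tcol : gen_bnc g = mk (arity (gtree g)) (tcol (gtree g)) by case: g.
rewrite /= IHl IHr gen_tcol comp_tcol // comp_tcol // arity_graft //=.
Qed.

Lemma bsize_eval t : bsize (eval t) = arity t.
Proof. by rewrite evalE. Qed.

Lemma eval_graft t i s :
  1 <= i <= arity t -> eval (graft t i s) = Defs.comp (eval t) i (eval s).
Proof. by move=> Hi; rewrite !evalE comp_tcol. Qed.

Lemma gen_sub_eval x : gen_sub x <-> exists t, eval t = x.
Proof.
split.
  elim=> [|||C D i _ [t <-] _ [s <-] Hi]; first by exists Leaf.
  - by exists P; rewrite evalE.
  - by exists Cg; rewrite evalE.
  by exists (graft t i s); rewrite eval_graft -?bsize_eval.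
move=> [t <-]; elim: t => [|g l IHl r IHr] /=; first exact: gs_unit.
have gen_sub_g : gen_sub (gen_bnc g) by case: g; [exact: gs_p | exact: gs_c].
have size_g : bsize (gen_bnc g) = 2 by case: (g).
apply: gs_comp => //; first by apply: gs_comp => //; rewrite size_g.
by rewrite comp_mk /= size_g bsize_eval; have := arity_gt0 r; lia.
Qed.

Lemma cong_eval t t' : cong t t' -> eval t = eval t'.
Proof.
elim=> [||t0|t0 t1 _ ->|t0 t1 t2 _ -> _ ->|t1 t1' s s' i _ E1 _ E2 Hi] //;
  try by rewrite !evalE.
by rewrite !eval_graft ?E1 ?E2 // -bsize_eval -E1 bsize_eval.
Qed.

Lemma cong_node g l l' r r' :
  cong l l' -> cong r r' -> cong (Node g l r) (Node g l' r').
Proof.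
move=> Hl Hr; have nodeE x y : Node g x y = graft (graft (gtree g) 2 y) 1 x by [].
rewrite (nodeE l r) (nodeE l' r').
apply: cong_comp Hl _; first exact: cong_comp (cong_refl _) Hr _.
by rewrite arity_graft //=; have := arity_gt0 r; lia.
Qed.

Lemma cong_graft4 X Y a b e d : cong X Y -> arity X = 4 ->
  cong (graft (graft (graft (graft X 4 d) 3 e) 2 b) 1 a)
       (graft (graft (graft (graft Y 4 d) 3 e) 2 b) 1 a).
Proof.
move=> XY X4; have := arity_gt0 d; have := arity_gt0 e; have := arity_gt0 b => *.
apply: cong_comp (cong_refl a) _; last by rewrite !arity_graft; lia.
apply: cong_comp (cong_refl b) _; last by rewrite !arity_graft; lia.
apply: cong_comp (cong_refl e) _; last by rewrite !arity_graft; lia.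
by apply: cong_comp XY (cong_refl d) _; lia.
Qed.

Lemma cong_rotate g a b e d :
  cong (Node g (Node gc a (Node gp b e)) d) (Node g a (Node gp (Node gc b e) d)).
Proof.
by case: g; [exact: cong_graft4 a b e d (cong_sym cong_rel2) erefl
            | exact: cong_graft4 a b e d (cong_sym cong_rel1) erefl].
Qed.

Definition redex (t : tree) : bool :=
  if t is Node gc _ (Node gp _ _) then true else false.

Fixpoint normal (t : tree) : bool :=
  if t is Node _ l r then [&& normal l, normal r & ~~ redex l] else true.

Fixpoint left_weight (t : tree) : nat :=
  if t is Node _ l r then arity l + left_weight l + left_weight r else 0.

Lemma rotate_step t : ~~ normal t ->
  exists t', [/\ cong t t', arity t' = arity t & left_weight t' < left_weight t].
Proof.
elim: t => [|g l IHl r IHr] //=.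
case Hl: (normal l) => /=; last first.
  case: (IHl (negbT Hl)) => l' [Hll' El Wl].
  by exists (Node g l' r); split => /=; [exact: cong_node Hll' (cong_refl r) | lia | lia].
case Hr: (normal r) => /=; last first.
  case: (IHr (negbT Hr)) => r' [Hrr' Er Wr].
  by exists (Node g l r'); split => /=; [exact: cong_node (cong_refl l) Hrr' | lia | lia].
case: l {IHl Hl} => [|[] a [|[] b e]] //= _.
exists (Node g a (Node gp (Node gc b e) r)); split => /=; [exact: cong_rotate | lia |].
by have := arity_gt0 a; lia.
Qed.

Lemma normal_form t : exists2 u, normal u & cong t u.
Proof.
elim: {t}(left_weight t).+1 {-2}t (ltnSn (left_weight t)) => // n IH t Wt.
case Ht: (normal t); first by exists t => //; exact: cong_refl.
case: (rotate_step (negbT Ht)) => t' [Htt' _ Wt'].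
have [|u Hu Ht'u] := IH t'; first lia.
by exists u => //; exact: cong_trans Htt' Ht'u.
Qed.

Section NodeColours.
Variables (g : gen) (l r : tree).

Let arity_l_gt0 := arity_gt0 l.
Let arity_r_gt0 := arity_gt0 r.

Lemma tcol_node_left a b : b <= (arity l).+1 -> tcol (Node g l r) a b = tcol l a b.
Proof. by move=> Hb; rewrite /= /is_arc; index_cases; close_colours a b. Qed.

Lemma tcol_node_right a b : 1 <= a -> (a != 1) || (b != (arity r).+1) ->
  tcol (Node g l r) (a + arity l) (b + arity l) = tcol r a b.
Proof. by move=> Ha Hab; rewrite /= /is_arc; index_cases; close_colours a b. Qed.

Lemma tcol_node_glued :
  tcol (Node g l r) (arity l).+1 (arity l + arity r).+1 =
    if tcol r 1 (arity r).+1 == cU then cR else cU.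
Proof. by rewrite /= /is_arc; index_cases. Qed.

Lemma tcol_node_base : tcol (Node g l r) 1 (arity l + arity r).+1 = gen_colour g.
Proof. by rewrite /= /is_arc; index_cases. Qed.

Lemma tcol_node_split a b : tcol (Node g l r) a b != cU ->
  (a != 1) || (b != (arity l + arity r).+1) -> b <= (arity l).+1 \/ (arity l).+1 <= a.
Proof.
move=> Hab Hbase; case: (leqP b (arity l).+1) => ?; [by left|].
case: (leqP (arity l).+1 a) => ?; [by right|].
by move: Hab; rewrite /= /is_arc; index_cases.
Qed.

End NodeColours.

Fixpoint left_span (t : tree) : nat :=
  if t is Node _ l _ then (if l is Node gc _ _ then left_span l else arity l) else 0.

Lemma left_span_spec t : 2 <= arity t ->
  [/\ 1 <= left_span t, left_span t < arity t, tcol t 1 (left_span t).+1 = cB &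
      forall w, w <= arity t -> tcol t 1 w != cU -> w <= (left_span t).+1].
Proof.
elim: t => [|g l IHl r _] // _; have Hl0 := arity_gt0 l; have Hr0 := arity_gt0 r.
have short_arcs w : w <= arity (Node g l r) -> tcol (Node g l r) 1 w != cU -> w <= (arity l).+1.
  by move=> /= Hw /tcol_node_split [] //; [apply/orP; right; lia | lia].
case: l IHl short_arcs Hl0 => [|[] l1 l2] IHl short_arcs Hl0.
- split; [done | rewrite /=; lia | by rewrite [left_span _]/= tcol_node_left | exact: short_arcs].
- split; [done | rewrite /=; lia | | exact: short_arcs].
  by rewrite [left_span _]/= tcol_node_left // tcol_node_base.
have [|span_gt0 span_lt span_blue span_max] := IHl.
  by have := arity_gt0 l1; have := arity_gt0 l2; rewrite /=; lia.
have -> : left_span (Node g (Node gc l1 l2) r) = left_span (Node gc l1 l2) by [].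
have -> : arity (Node g (Node gc l1 l2) r) = arity (Node gc l1 l2) + arity r by [].
split; [done | lia | by rewrite tcol_node_left //; lia |].
move=> w Hw Hw1; have := short_arcs w Hw Hw1.
rewrite leq_eqVlt ltnS => /orP [/eqP Ew | Hw']; last first.
  by apply: span_max => //; rewrite -(@tcol_node_left g _ r) //; lia.
by move: Hw1; rewrite Ew tcol_node_left // tcol_node_base.
Qed.

Definition is_pnode (t : tree) : bool := if t is Node gp _ _ then true else false.

Fixpoint comb (t : tree) : bool :=
  if t is Node gc l r then comb l && ~~ is_pnode r else true.

Lemma normal_comb t : normal t -> ~~ redex t -> comb t.
Proof.
elim: t => [|[] l IHl r _] //= /and3P [Hl _ Hlr] Hr.
by rewrite IHl //; case: r Hr => [|[]].
Qed.

Lemma comb_inner_vertex t v : comb t -> 1 < v <= arity t ->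
  (exists a b, [/\ a < v, v < b & tcol t a b != cU]) \/
  (exists u, [/\ v < u <= (arity t).+1, (forall w, tcol t v w != cU -> w <= u),
                 tcol t v u != cB & (v.+1 < u -> tcol t v u = cR)]).
Proof.
elim: t v => [|g l IHl r _] v; first by rewrite /=; lia.
have Hl0 := arity_gt0 l; have Hr0 := arity_gt0 r.
case: g => [_ Hv | /andP [Hl Hr] Hv].
  left; exists 1, (arity l + arity r).+1; rewrite tcol_node_base.
  by split => //; move: Hv => /=; lia.
move: Hv; rewrite [arity (Node gc l r)]/= => Hv.
case: (ltngtP v (arity l).+1) => Hvl.
- have [[a [b [Hav Hvb Hab]]] | [u [Hu Hmax Hblue Hred]]] := IHl v Hl ltac:(lia).
    left; exists a, b; split => //.
    by rewrite tcol_node_left //; case/and3P: (tcol_arc Hab).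
  right; exists u; split; [lia | | by rewrite tcol_node_left //; lia |].
    move=> w Hw; case: (tcol_node_split Hw); [apply/orP; left; lia | | lia].
    by move=> Hwl; apply: Hmax; rewrite -(@tcol_node_left gc l r).
  by move=> Hvu; rewrite tcol_node_left ?Hred //; lia.
- left; exists (arity l).+1, (arity l + arity r).+1; split; [lia | lia |].
  case: r Hr Hr0 Hvl Hv => [|[] r1 r2] Hr _ Hvl Hv; [by move: Hv => /=; lia | by move: Hr |].
  by rewrite tcol_node_glued (@tcol_node_base gc r1 r2).
right; exists (arity l + arity r).+1; split; [lia | | |].
- by move=> w /tcol_arc /and3P [_ _].
- by rewrite Hvl tcol_node_glued; case: ifP.
rewrite Hvl tcol_node_glued => Hu.
case: r Hr Hr0 Hu Hv => [|[] r1 r2] Hr _ Hu _; [by move: Hu => /=; lia | by move: Hr |].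
by rewrite (@tcol_node_base gc r1 r2).
Qed.

Lemma left_arity_le_of_tcol g l r g' l' r' :
  normal (Node g' l' r') -> arity l + arity r = arity l' + arity r' ->
  (forall a b, tcol (Node g l r) a b = tcol (Node g' l' r') a b) ->
  arity l' <= arity l.
Proof.
move=> Hn Ha Hc; rewrite leqNgt; apply/negP => Hll'.
have := arity_gt0 l; have := arity_gt0 r; have := arity_gt0 l'; have := arity_gt0 r' => *.
have comb_l' : comb l' by case/and3P: Hn => Hl' _ Hred; apply: normal_comb.
have [span_gt0 span_lt span_blue span_max] := @left_span_spec r ltac:(lia).
set v := (arity l).+1.
have Hv : 1 < v <= arity l' by rewrite /v; lia.
have [[a [b [Hav Hvb Hab]]] | [u [Hu Hmax Hblue Hred]]] := comb_inner_vertex comb_l' Hv.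
  have Hb : b <= (arity l').+1 by case/and3P: (tcol_arc Hab).
  have : tcol (Node g l r) a b != cU by rewrite Hc tcol_node_left.
  by move=> /tcol_node_split [] //; [apply/orP; right | |]; rewrite /v in Hav Hvb *; lia.
set w := (left_span r).+1 + arity l.
have blue_vw : tcol (Node g l r) v w = cB.
  by rewrite /v /w -add1n tcol_node_right //; apply/orP; right; lia.
have Hw : w <= (arity l').+1.
  have : tcol (Node g' l' r') v w != cU by rewrite -Hc blue_vw.
  by move=> /tcol_node_split [] //; [apply/orP; left | ]; rewrite /v; lia.
have blue_l' : tcol l' v w = cB by rewrite -(@tcol_node_left g' l' r') // -Hc.
have : w < u.
  rewrite ltn_neqAle Hmax ?blue_l' // andbT.
  by apply: contraNneq Hblue => <-; rewrite blue_l'.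
rewrite /w => Hwu.
have Hur : (1 != 1) || (u - arity l != (arity r).+1) by apply/orP; right; lia.
have red_r : tcol r 1 (u - arity l) = cR.
  rewrite -(@tcol_node_right g l r 1 _ isT Hur) add1n subnK; last lia.
  by rewrite Hc tcol_node_left ?Hred //; lia.
have := span_max (u - arity l) ltac:(lia) ltac:(by rewrite red_r).
lia.
Qed.

Lemma normal_tcol_inj t t' : normal t -> normal t' -> arity t = arity t' ->
  (forall a b, tcol t a b = tcol t' a b) -> t = t'.
Proof.
elim: t t' => [|g l IHl r IHr] [|g' l' r'] //.
- by move=> _ _ /=; have := arity_gt0 l'; have := arity_gt0 r'; lia.
- by move=> _ _ /=; have := arity_gt0 l; have := arity_gt0 r; lia.
move=> Hn Hn' Ha Hc; rewrite /= in Ha.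
have /and3P [Hl Hr _] := Hn; have /and3P [Hl' Hr' _] := Hn'.
have Hc' a b : tcol (Node g' l' r') a b = tcol (Node g l r) a b by rewrite Hc.
have El : arity l = arity l'.
  by apply/eqP; rewrite eqn_leq (left_arity_le_of_tcol Hn' Ha Hc)
                                 (left_arity_le_of_tcol Hn (esym Ha) Hc').
have Er : arity r = arity r' by lia.
have -> : g = g'.
  move: (Hc 1 (arity l + arity r).+1).
  by rewrite tcol_node_base Ha tcol_node_base; case: (g); case: (g').
have -> : l = l'.
  apply: IHl => // a b; case: (leqP b (arity l).+1) => Hb.
    by rewrite -(@tcol_node_left g l r) // Hc tcol_node_left // -El.
  by rewrite !tcol_outside //; lia.
congr Node; apply: IHr => // a b.
case: (posnP a) => [->|Ha0]; first by rewrite !tcol_outside.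
have [/andP [/eqP -> /eqP ->] | Hab] := boolP ((a == 1) && (b == (arity r).+1)).
  move: (Hc (arity l).+1 (arity l + arity r).+1).
  rewrite tcol_node_glued Ha El tcol_node_glued Er.
  by move: (tcol_base r) (tcol_base r'); rewrite -Er; do 2!case: tcol.
rewrite negb_and in Hab.
by rewrite -(@tcol_node_right g l r) // Hc El tcol_node_right // -Er.
Qed.

Theorem theorem3p12 :
  (forall x : bnc, gen_sub x <-> exists t : tree, eval t = x) /\
  (forall t t' : tree, eval t = eval t' <-> cong t t').
Proof.
split=> [|t t']; first exact: gen_sub_eval.
split=> [Ett' | /cong_eval //].
have [u Hu Htu] := normal_form t; have [u' Hu' Htu'] := normal_form t'.
have Euu' : eval u = eval u' by rewrite -(cong_eval Htu) -(cong_eval Htu').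
have Eu : u = u'.
  apply: normal_tcol_inj => //; first by rewrite -!bsize_eval Euu'.
  by move=> a b; rewrite -getc_tcol -evalE Euu' evalE getc_tcol.
by rewrite Eu in Htu; exact: cong_trans Htu (cong_sym Htu').
Qed.
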